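(* Let $G_{\|v_0}$ be a well-initialized prefix-independent game, let $\epsilon\ge0$ and let $\bar\sigma$ be an $\epsilon$-SPE in $G_{\|v_0}$. Then there exists an $\epsilon$-fixed point $\lambda$ of the negotiation function such that for every history $hv$ of $G_{\|v_0}$, the play $\langle\bar\sigma_{\|hv}\rangle_v$ is $\lambda$-consistent.
   Context: A game is a tuple $G=(\Pi,V,(V_i)_{i\in\Pi},E,\mu)$ where $\Pi$ is a finite set of players, $(V,E)$ is a finite directed graph in which every vertex has at least one outgoing edge, $(V_i)_{i\in\Pi}$ is a partition of $V$, and $\mu:V^\omega\to\mathbb{R}^\Pi$ is the outcome function. Plays, histories, strategies, profiles, compatibility and $\langle\bar\sigma\rangle_v$ are as usual; $G_{\|v_0}$ is $G$ initialized at $v_0$ and is well-initialized if every vertex is reachable from $v_0$ in $(V,E)$; $-i$ denotes $\Pi\setminus\{i\}$; $\bar\sigma_{\|hv}$ is the profile in $G_{\|v}$ with $\sigma_{j\|hv}(h')=\sigma_j(hh')$. $G$ is prefix-independent if $\mu(h\rho)=\mu(\rho)$ for every history $h$ and play $\rho$. A profile $\bar\sigma$ in $G_{\|v_0}$ is an $\epsilon$-SPE if for every history $hv$ of $G_{\|v_0}$, every player $i$ and strategy $\sigma'_i$, $\mu_i(h\langle\bar\sigma_{-i\|hv},\sigma'_{i\|hv}\rangle_v)\le\mu_i(h\langle\bar\sigma_{\|hv}\rangle_v)+\epsilon$. A requirement is a map $\lambda:V\to\mathbb{R}\cup\{\pm\infty\}$. A play $\rho$ is $\lambda$-consistent if for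 every $i\in\Pi$ and $n$ with $\rho_n\in V_i$, $\mu_i(\rho_n\rho_{n+1}\cdots)\ge\lambda(\rho_n)$. $\lambda\mathrm{Rat}_i(v)$ is the set of profiles $\bar\sigma_{-i}$ in $G_{\|v}$ for which there exists $\sigma_i$ such that for every history $hw$ from $v$ compatible with $\bar\sigma_{-i}$, $\langle\bar\sigma_{\|hw}\rangle_w$ is $\lambda$-consistent. For $i\in\Pi$, $v\in V_i$: $\mathrm{nego}(\lambda)(v)=\inf_{\bar\sigma_{-i}\in\lambda\mathrm{Rat}_i(v)}\sup_{\sigma_i}\mu_i(\langle\bar\sigma_{-i},\sigma_i\rangle_v)$, $\inf\emptyset=+\infty$. $\lambda$ is an $\epsilon$-fixed point of $\mathrm{nego}$ if $\lambda(v)-\epsilon\le\mathrm{nego}(\lambda)(v)\le\lambda(v)+\epsilon$ for all $v$ (with $\pm\infty\pm\epsilon=\pm\infty$). *)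

From Stdlib Require Import Reals List Relations.
From Coquelicot Require Import Rbar Lub.
Import ListNotations.
Open Scope R_scope.

Record Game := mkGame {
  Pl : Type;
  Pl_finite : exists l : list Pl, forall i, In i l;
  Pl_eq_dec : forall i j : Pl, {i = j} + {i <> j};
  Vx : Type;
  V_finite : exists l : list Vx, forall v, In v l;
  owner : Vx -> Pl;                       (* v \in V_i  <->  owner v = i *)
  Edge : Vx -> Vx -> Prop;
  Edge_total : forall v, exists w, Edge v w;
  mu : (nat -> Vx) -> Pl -> R }.

Section GameDefs.
Variable G : Game.
Local Notation V := (Vx G).
Local Notation P := (Pl G).

Definition is_play (rho : nat -> V) : Prop := forall n, Edge G (rho n) (rho (S n)).

Fixpoint is_path (h : list V) : Prop :=
  match h with
  | [] => True
  | x :: t => match t with [] => True | y :: _ => Edge G x y /\ is_path t end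
  end.

Definition is_history (h : list V) : Prop := h <> [] /\ is_path h.

Definition is_history_from (v : V) (h : list V) : Prop :=
  is_path h /\ hd_error h = Some v.

(* strategies are total maps on finite sequences; validity: whenever the last
   vertex w belongs to player i, the chosen vertex is a successor of w *)
Definition strategy := list V -> V.
Definition profile := P -> strategy.

Definition valid_strategy (i : P) (s : strategy) : Prop :=
  forall h w, owner G w = i -> Edge G w (s (h ++ [w])).
Definition valid_profile (sg : profile) : Prop := forall i, valid_strategy i (sg i).
(* a profile sigma_{-i}, represented by a full profile whose i-component is ignored *)
Definition valid_profile_except (i : P) (sg : profile) : Prop :=
  forall j, j <> i -> valid_strategy j (sg j).

Definition dev (sg : profile) (i : P) (s : strategy) : profile :=
  fun j => if Pl_eq_dec G j i then s else sg j.

(* sigma_{|hv}: sigma_{j|hv}(h') = sigma_j(h h'), h' a history from v *)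
Definition restrict_s (s : strategy) (h : list V) : strategy := fun h' => s (h ++ h').
Definition restrict (sg : profile) (h : list V) : profile :=
  fun j => restrict_s (sg j) h.

Fixpoint out_pref (sg : profile) (v : V) (n : nat) : list V :=
  match n with
  | O => [v]
  | S m => let p := out_pref sg v m in p ++ [sg (owner G (last p v)) p]
  end.
Definition outcome (sg : profile) (v : V) : nat -> V :=
  fun n => last (out_pref sg v n) v.

Definition app_play (h : list V) (rho : nat -> V) : nat -> V :=
  fun n => if Nat.ltb n (length h) then nth n h (rho O) else rho (n - length h)%nat.

Definition suffix (rho : nat -> V) (n : nat) : nat -> V := fun k => rho (n + k)%nat.

Definition prefix_independent : Prop :=
  forall (h : list V) (rho : nat -> V),
    is_history h -> is_play rho -> Edge G (last h (rho O)) (rho O) ->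
    forall i, mu G (app_play h rho) i = mu G rho i.

Definition well_initialized (v0 : V) : Prop :=
  forall v, clos_refl_trans V (Edge G) v0 v.

Definition eps_SPE (eps : R) (v0 : V) (sg : profile) : Prop :=
  valid_profile sg /\
  forall (h : list V) (v : V), is_history_from v0 (h ++ [v]) ->
  forall (i : P) (s' : strategy), valid_strategy i s' ->
    mu G (app_play h (outcome (dev (restrict sg h) i (restrict_s s' h)) v)) i
    <= mu G (app_play h (outcome (restrict sg h) v)) i + eps.

Definition requirement := V -> Rbar.

Definition consistent (lam : requirement) (rho : nat -> V) : Prop :=
  forall n, Rbar_le (lam (rho n)) (Finite (mu G (suffix rho n) (owner G (rho n)))).

Definition compatible_except (i : P) (sg : profile) (hw : list V) : Prop :=
  forall pre u u' suf, hw = pre ++ u :: u' :: suf -> owner G u <> i ->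
    u' = sg (owner G u) (pre ++ [u]).

Definition lamRat (lam : requirement) (i : P) (v : V) (sg : profile) : Prop :=
  valid_profile_except i sg /\
  exists s : strategy, valid_strategy i s /\
    forall (h : list V) (w : V), is_history_from v (h ++ [w]) ->
      compatible_except i sg (h ++ [w]) ->
      consistent lam (outcome (restrict (dev sg i s) h) w).

(* nego(lambda)(v) = inf_{sigma_{-i} in lamRat_i(v)} sup_{sigma_i} mu_i(<sigma_{-i},sigma_i>_v),
   with i the owner of v; inf of the empty set is +oo *)
Definition nego (lam : requirement) (v : V) : Rbar :=
  let i := owner G v in
  Rbar_glb (fun x : Rbar => exists sg : profile, lamRat lam i v sg /\
     x = Lub_Rbar (fun r : R => exists s : strategy, valid_strategy i s /\
                                   r = mu G (outcome (dev sg i s) v) i)).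

Definition eps_fixed_point (eps : R) (lam : requirement) : Prop :=
  forall v, Rbar_le (Rbar_plus (lam v) (Finite (- eps))) (nego lam v) /\
            Rbar_le (nego lam v) (Rbar_plus (lam v) (Finite eps)).

End GameDefs.

From Stdlib Require Import Reals List.
From Coquelicot Require Import Rbar Lub.
From Stdlib Require Import Lra Lia FunctionalExtensionality.
Import ListNotations.
Open Scope R_scope.

(* Given the epsilon-SPE sigma, define the requirement
     lambda(v) = inf { mu_i(<sigma_|hv>_v) | hv a history of G_||v0 },  i = owner v
   (the worst payoff the owner of v receives from sigma in a subgame at v).
   - Consistency: every suffix of <sigma_|hv>_v is itself <sigma_|h'w>_w for a
     longer history h'w, so its value for the owner of w is >= lambda(w).
   - nego(lambda) >= lambda holds for every requirement: a profile in lambdaRat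
     together with its witness strategy yields a lambda-consistent play from v.
   - nego(lambda)(v) <= lambda(v) + eps: for each history hv, sigma_|hv is in
     lambdaRat (by consistency), and by the epsilon-SPE property together with
     prefix independence no deviation of the owner of v from sigma_|hv gains more
     than eps; taking the infimum over hv gives the bound. *)

Lemma Rbar_glb_correct (E : Rbar -> Prop) : Rbar_is_glb E (Rbar_glb E).
Proof. unfold Rbar_glb. destruct (Rbar_ex_glb E) as [l Hl]. exact Hl. Qed.

Lemma Rbar_le_plus_shift (c x : Rbar) (e : R) :
  Rbar_le (Rbar_plus c (Finite (- e))) x <-> Rbar_le c (Rbar_plus x (Finite e)).
Proof. destruct c, x; simpl; split; intros; auto; lra. Qed.

Lemma Rbar_le_minus_nonneg (x : Rbar) (e : R) :
  0 <= e -> Rbar_le (Rbar_plus x (Finite (- e))) x.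
Proof. intros He; destruct x; simpl; auto; lra. Qed.

Section Outcomes.
Variable G : Game.
Local Notation V := (Vx G).

Lemma out_pref_snoc (t : profile G) v n :
  exists pre, out_pref G t v n = pre ++ [outcome G t v n].
Proof.
  destruct n as [|n]; [exists []; reflexivity|].
  exists (out_pref G t v n). unfold outcome. cbn [out_pref]. rewrite last_last. reflexivity.
Qed.

Lemma out_pref_cons (t : profile G) v n : exists l, out_pref G t v n = v :: l.
Proof.
  induction n as [|n [l E]]; [exists []; reflexivity|].
  cbn [out_pref]. rewrite E. eexists. reflexivity.
Qed.

Lemma outcome_S (t : profile G) v n :
  outcome G t v (S n) = t (owner G (outcome G t v n)) (out_pref G t v n).
Proof. unfold outcome at 1. cbn [out_pref]. rewrite last_last. reflexivity. Qed.

Lemma restrict_app (t : profile G) h h' :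
  restrict G (restrict G t h) h' = restrict G t (h ++ h').
Proof.
  unfold restrict, restrict_s. apply functional_extensionality; intro j.
  apply functional_extensionality; intro l. now rewrite app_assoc.
Qed.

Lemma dev_self (t : profile G) i : dev G t i (t i) = t.
Proof.
  apply functional_extensionality; intro j. unfold dev.
  destruct (Pl_eq_dec G j i); subst; reflexivity.
Qed.

Lemma out_pref_shift (t : profile G) v n pre x :
  out_pref G t v n = pre ++ [x] ->
  forall k, out_pref G t v (n + k)%nat = pre ++ out_pref G (restrict G t pre) x k.
Proof.
  intros H k. induction k as [|k IH]; [now rewrite Nat.add_0_r|].
  rewrite Nat.add_succ_r. cbn [out_pref]. rewrite IH.
  destruct (out_pref_snoc (restrict G t pre) x k) as [pre' E]. rewrite E.
  rewrite !app_assoc, !last_last. unfold restrict, restrict_s.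
  rewrite <- !app_assoc. reflexivity.
Qed.

Lemma suffix_outcome (t : profile G) v n pre x :
  out_pref G t v n = pre ++ [x] ->
  suffix G (outcome G t v) n = outcome G (restrict G t pre) x.
Proof.
  intros H. apply functional_extensionality; intro k. unfold suffix, outcome at 1.
  rewrite (out_pref_shift t v n pre x H).
  destruct (out_pref_snoc (restrict G t pre) x k) as [pre' E].
  unfold outcome. rewrite E, app_assoc, !last_last. reflexivity.
Qed.

Lemma outcome_ext (t1 t2 : profile G) :
  (forall j l, l <> [] -> t1 j l = t2 j l) -> forall v, outcome G t1 v = outcome G t2 v.
Proof.
  intros H v. assert (Hpref : forall n, out_pref G t1 v n = out_pref G t2 v n).
  { induction n as [|n IH]; [reflexivity|].
    cbn [out_pref]. rewrite IH. do 2 f_equal. apply H.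
    destruct (out_pref_cons t2 v n) as [l E]. rewrite E. discriminate. }
  apply functional_extensionality; intro n. unfold outcome. now rewrite Hpref.
Qed.

Lemma valid_restrict (t : profile G) h :
  valid_profile G t -> valid_profile G (restrict G t h).
Proof.
  intros Hv j h0 w Hw. unfold restrict, restrict_s. rewrite app_assoc. now apply Hv.
Qed.

Lemma valid_dev (t : profile G) i s :
  valid_profile G t -> valid_strategy G i s -> valid_profile G (dev G t i s).
Proof. intros Hv Hs j. unfold dev. destruct (Pl_eq_dec G j i); subst; auto. Qed.

Lemma is_path_prefix (l m : list V) : is_path G (l ++ m) -> is_path G l.
Proof.
  induction l as [|a l IH]; intros H; simpl in *; auto.
  destruct l as [|b l]; simpl in *; intuition.
Qed.

Lemma is_path_app (h : list V) v t :
  is_path G (h ++ [v]) -> is_path G (v :: t) -> is_path G (h ++ v :: t).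
Proof.
  induction h as [|a h IH]; intros H1 H2; simpl in *; auto.
  destruct h as [|b h]; simpl in *; intuition.
Qed.

Lemma edge_last (h : list V) v d :
  is_path G (h ++ [v]) -> h <> [] -> Edge G (last h d) v.
Proof.
  induction h as [|a h IH]; intros H1 H2; [congruence|].
  destruct h as [|b h]; simpl in *; [tauto|].
  destruct H1 as [_ H1]. apply IH; auto. discriminate.
Qed.

Lemma history_concat (v0 v : V) h l :
  is_history_from G v0 (h ++ [v]) -> is_history_from G v l ->
  is_history_from G v0 (h ++ l).
Proof.
  intros [H1 H2] [H3 H4]. destruct l as [|v' t]; [discriminate|].
  simpl in H4. injection H4 as ->. split; [now apply is_path_app|].
  destruct h; simpl in *; auto.
Qed.

Lemma out_pref_history (t : profile G) v n :
  valid_profile G t -> is_history_from G v (out_pref G t v n).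
Proof.
  intros Hv. destruct (out_pref_cons t v n) as [l E]. split; [|now rewrite E].
  clear E. induction n as [|n IH]; [simpl; auto|].
  cbn [out_pref]. destruct (out_pref_snoc t v n) as [pre E]. rewrite E in *.
  rewrite last_last, <- app_assoc. apply is_path_app; auto.
  simpl. split; auto. now apply Hv.
Qed.

Lemma outcome_play (t : profile G) v : valid_profile G t -> is_play G (outcome G t v).
Proof.
  intros Hv n. rewrite outcome_S. destruct (out_pref_snoc t v n) as [pre E].
  rewrite E. now apply Hv.
Qed.

Lemma prefix_independent_app (h : list V) v rho :
  prefix_independent G -> is_path G (h ++ [v]) -> is_play G rho -> rho O = v ->
  forall i, mu G (app_play G h rho) i = mu G rho i.
Proof.
  intros PI Hp Hr H0 i. destruct h as [|a h].
  - f_equal. apply functional_extensionality; intro n. unfold app_play. simpl.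
    now rewrite Nat.sub_0_r.
  - apply PI; auto.
    + split; [discriminate|exact (is_path_prefix _ _ Hp)].
    + rewrite H0. apply edge_last; auto. discriminate.
Qed.

Definition graft (h : list V) (s base : strategy G) : strategy G :=
  fun l => if Nat.ltb (length h) (length l) then s (skipn (length h) l) else base l.

Lemma graft_valid i h s base :
  valid_strategy G i s -> valid_strategy G i base -> valid_strategy G i (graft h s base).
Proof.
  intros Hs Hb h0 w Hw. unfold graft.
  destruct (Nat.ltb_spec (length h) (length (h0 ++ [w]))) as [Hl|Hl]; [|now apply Hb].
  rewrite skipn_app. rewrite length_app in Hl. simpl in Hl.
  replace (length h - length h0)%nat with 0%nat by lia. now apply Hs.
Qed.

Lemma graft_restrict h s base l :
  l <> [] -> restrict_s G (graft h s base) h l = s l.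
Proof.
  intros Hl. unfold restrict_s, graft. rewrite length_app.
  destruct (Nat.ltb_spec (length h) (length h + length l)) as [H|H].
  - now rewrite skipn_app, skipn_all, Nat.sub_diag.
  - destruct l; [congruence|simpl in H; lia].
Qed.

End Outcomes.

Lemma nego_ge_requirement (G : Game) (lam : requirement G) v :
  Rbar_le (lam v) (nego G lam v).
Proof.
  apply (proj2 (Rbar_glb_correct _)). intros x [t [[_ [s [Hs Hc]]] ->]].
  set (i := owner G v).
  assert (Hcomp : compatible_except G i t ([] ++ [v])).
  { intros pre u u' suf E. destruct pre as [|a [|b pre]]; discriminate. }
  specialize (Hc [] v (conj I eq_refl) Hcomp 0%nat).
  change (Rbar_le (lam v) (Finite (mu G (outcome G (dev G t i s) v) i))) in Hc.
  eapply Rbar_le_trans; [exact Hc|].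
  apply (proj1 (Lub_Rbar_correct _)). now exists s.
Qed.

Lemma nego_le_lamRat (G : Game) (lam : requirement G) v (t : profile G) :
  lamRat G lam (owner G v) v t ->
  Rbar_le (nego G lam v)
    (Lub_Rbar (fun r => exists s, valid_strategy G (owner G v) s /\
                                  r = mu G (outcome G (dev G t (owner G v) s) v) (owner G v))).
Proof. intros Ht. apply (proj1 (Rbar_glb_correct _)). now exists t. Qed.

Section SPE.
Variables (G : Game) (v0 : Vx G) (eps : R) (sg : profile G).
Hypothesis PI : prefix_independent G.
Hypothesis Hspe : eps_SPE G eps v0 sg.

Let Hval : valid_profile G sg := proj1 Hspe.

Definition spe_requirement : requirement G := fun v =>
  Rbar_glb (fun x => exists h, is_history_from G v0 (h ++ [v]) /\
              x = Finite (mu G (outcome G (restrict G sg h) v) (owner G v))).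

Lemma spe_consistent h v :
  is_history_from G v0 (h ++ [v]) ->
  consistent G spe_requirement (outcome G (restrict G sg h) v).
Proof.
  intros Hh n.
  destruct (out_pref_snoc G (restrict G sg h) v n) as [pre E].
  rewrite (suffix_outcome G _ _ _ _ _ E), restrict_app.
  apply (proj1 (Rbar_glb_correct _)). exists (h ++ pre). split; [|reflexivity].
  rewrite <- app_assoc, <- E. eapply history_concat; [exact Hh|].
  apply out_pref_history, valid_restrict, Hval.
Qed.

Lemma spe_lamRat h v i :
  is_history_from G v0 (h ++ [v]) -> lamRat G spe_requirement i v (restrict G sg h).
Proof.
  intros Hh. split; [intros j _; now apply valid_restrict|].
  exists (restrict G sg h i). split; [now apply valid_restrict|].
  intros h' w Hh' _. rewrite dev_self, restrict_app.
  apply spe_consistent. rewrite <- app_assoc. eapply history_concat; eauto.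
Qed.

Lemma spe_deviation_bound h v s :
  is_history_from G v0 (h ++ [v]) -> valid_strategy G (owner G v) s ->
  mu G (outcome G (dev G (restrict G sg h) (owner G v) s) v) (owner G v)
  <= mu G (outcome G (restrict G sg h) v) (owner G v) + eps.
Proof.
  intros Hh Hs. set (i := owner G v).
  assert (Hgraft := graft_valid G i h s (sg i) Hs (Hval i)).
  assert (Hsp := proj2 Hspe h v Hh i _ Hgraft).
  assert (Heq : outcome G (dev G (restrict G sg h) i (restrict_s G (graft G h s (sg i)) h)) v =
                outcome G (dev G (restrict G sg h) i s) v).
  { apply outcome_ext. intros j l Hl. unfold dev.
    destruct (Pl_eq_dec G j i); [now apply graft_restrict|reflexivity]. }
  rewrite Heq in Hsp. destruct Hh as [Hp _].
  rewrite !(prefix_independent_app G h v _ PI Hp) in Hsp; try reflexivity; auto.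
  - apply outcome_play, valid_restrict, Hval.
  - apply outcome_play, valid_dev; [apply valid_restrict, Hval|exact Hs].
Qed.

Lemma spe_nego_upper v :
  Rbar_le (nego G spe_requirement v) (Rbar_plus (spe_requirement v) (Finite eps)).
Proof.
  apply Rbar_le_plus_shift, (proj2 (Rbar_glb_correct _)). intros x [h [Hh ->]].
  apply Rbar_le_plus_shift. eapply Rbar_le_trans.
  - apply nego_le_lamRat, (spe_lamRat h v _ Hh).
  - apply (proj2 (Lub_Rbar_correct _)). intros r [s [Hs ->]].
    exact (spe_deviation_bound h v s Hh Hs).
Qed.

End SPE.

Theorem mainTheorem4 (G : Game) (v0 : Vx G) (eps : R) (sg : profile G) :
  well_initialized G v0 ->
  prefix_independent G ->
  0 <= eps ->
  eps_SPE G eps v0 sg ->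
  exists lam : requirement G,
    eps_fixed_point G eps lam /\
    forall (h : list (Vx G)) (v : Vx G), is_history_from G v0 (h ++ [v]) ->
      consistent G lam (outcome G (restrict G sg h) v).
Proof.
  intros _ PI Heps Hspe.
  exists (spe_requirement G v0 sg). split.
  - intro v. split.
    + eapply Rbar_le_trans; [apply Rbar_le_minus_nonneg, Heps|].
      apply nego_ge_requirement.
    + exact (spe_nego_upper G v0 eps sg PI Hspe v).
  - exact (spe_consistent G v0 eps sg Hspe).
Qed.
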